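(* Let $I^\bullet$ be a bounded complex of free modules in $\mathcal{M}_\Lambda$ with $F_0I^\bullet=0$. Then for any bounded complex $K^\bullet$ of modules in $\mathcal{M}_\Lambda$, the maps induced by the inclusion $\sigma K^\bullet\hookrightarrow K^\bullet$, $$\mathrm{Hom}_{\mathbf{C}(\Lambda)}(K^\bullet,I^\bullet)\to\mathrm{Hom}_{\mathbf{C}(\Lambda)}(\sigma K^\bullet,I^\bullet)\quad\text{and}\quad \mathrm{Hom}_{\mathbf{K}(\Lambda)}(K^\bullet,I^\bullet)\to\mathrm{Hom}_{\mathbf{K}(\Lambda)}(\sigma K^\bullet,I^\bullet),$$ are isomorphisms.
   Context: Let $k$ be a field, $n\ge2$, $V$ a $k$-vector space of dimension $n+1$, $\Lambda=\bigoplus_{d\ge0}\Lambda^dV$ the exterior algebra graded by $\Lambda_d=\Lambda^dV$. $\mathcal{M}_\Lambda$ is the category of finitely generated graded right $\Lambda$-modules; $N(a)_i=N_{a+i}$; $N^\vee_i=(N_{-i})^*$, so $\Lambda^\vee_i=\Lambda^{-i}V^*$. A free module is a finite direct sum of modules $\Lambda^\vee(a)$. $\mathbf{C}(\Lambda)$ and $\mathbf{K}(\Lambda)$ are the category of complexes in $\mathcal{M}_\Lambda$ and its homotopy category. For $N$ in $\mathcal{M}_\Lambda$ and $d\in\mathbb{Z}$, $N_{\le d}$ (resp. $N_{\ge d}$) denotes the submodule generated by the homogeneous elements of degree $\le d$ (resp. $\ge d$). For a complex $I^\bullet$ of free modules, $F_jI^p:=I^p_{\le j-p-n-1}$ (if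 $I^p=\bigoplus_iH^i_{p-i}\otimes\Lambda^\vee(p-i)$ then $F_jI^p=\bigoplus_{i\le j}H^i_{p-i}\otimes\Lambda^\vee(p-i)$); $F_0I^\bullet=0$ means $F_0I^p=0$ for all $p$. For a complex $K^\bullet$, $\sigma K^\bullet$ is the subcomplex with $\sigma K^p=K^p_{\ge -p}$. *)

From HB Require Import structures.
From mathcomp Require Import all_boot all_order all_algebra.
Set Implicit Arguments. Unset Strict Implicit. Unset Printing Implicit Defensive.
Import Order.TTheory GRing.Theory Num.Theory.
Local Open Scope ring_scope.

(* Throughout: k a field, V = k^(n+1) with basis e_0, ..., e_n (indexed by
   'I_n.+1), Lambda = exterior algebra of V, graded with e_j in degree 1.
   A graded right Lambda-module is the same as a family of k-vector spaces
   N_d (d : int) with linear maps (right multiplication by e_j)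
   N_d -> N_(d+1) satisfying x e_j e_j = 0 and x e_j e_l + x e_l e_j = 0,
   since Lambda is presented by the generators e_j and these relations. *)

Section Graded.
Variables (k : fieldType) (n : nat).

Record gdata := GData {
  gpiece : int -> vectType k;
  gact : 'I_n.+1 -> forall d : int, 'Hom(gpiece d, gpiece (d + 1))
}.

(* bounded : only finitely many nonzero graded pieces (all are finite
   dimensional), i.e. finitely generated (= finite dimensional over k). *)
Definition is_gmod (N : gdata) : Prop :=
  [/\ exists a b : int, forall d, ~~ (a <= d <= b) ->
          forall x : gpiece N d, x = 0,
      forall j d (x : gpiece N d),
          gact N j (d + 1) (gact N j d x) = 0
    & forall j l d (x : gpiece N d),
          gact N l (d + 1) (gact N j d x) + gact N j (d + 1) (gact N l d x) = 0].

Definition is_gmor (M N : gdata) (f : forall d, 'Hom(gpiece M d, gpiece N d)) :=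
  forall j d (x : gpiece M d), f (d + 1) (gact M j d x) = gact N j d (f d x).

(* N_{<= d} = 0 : the submodule generated by homogeneous elements of degree
   <= d vanishes, i.e. all those generators vanish *)
Definition le_zero (N : gdata) (d : int) : Prop :=
  forall e, e <= d -> forall x : gpiece N e, x = 0.

(* Lambda^vee(a)_i = (Lambda^{-(a+i)} V)^*, realised as functions on the
   subsets S of {0..n} with #|S| = -(a+i) (coordinates on the basis e_S);
   the right action is (phi . x)(w) = phi(x /\ w), so that
   (phi . e_j)(e_S) = 0 if j \in S, and sign * phi(e_(S + j)) otherwise, with
   e_j /\ e_S = (-1)^#{l in S | l < j} e_(S+j).
   A finite direct sum  (+)_t Lambda^vee(s_t)  is realised on functions of
   pairs (t, S). *)
Definition fidx (s : seq int) := ('I_(size s) * {set 'I_n.+1})%type.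
Definition fW (s : seq int) := {ffun fidx s -> k^o}.

Definition fdelta (s : seq int) (ts : fidx s) : fW s :=
  [ffun u => ((u == ts)%:R : k^o)].

Definition fU (s : seq int) (i : int) : {vspace fW s} :=
  <<[seq fdelta ts | ts <- enum [pred ts : fidx s |
        (#|ts.2|%:Z == - (s`_(ts.1) + i))]]>>%VS.

Definition factW (s : seq int) (j : 'I_n.+1) (phi : fW s) : fW s :=
  [ffun ts : fidx s => if j \in ts.2 then 0
     else (((-1) ^+ #|[set l in ts.2 | (l < j)%N]| : k) * phi (ts.1, j |: ts.2) : k^o)].

Definition fpiece (s : seq int) (i : int) : vectType k := subvs_of (fU s i).

Definition fact (s : seq int) (j : 'I_n.+1) (i : int) :
  'Hom(fpiece s i, fpiece s (i + 1)) :=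
  linfun (fun u : subvs_of (fU s i) => vsproj (fU s (i + 1)) (factW j (vsval u))).

Definition is_free (N : gdata) : Prop :=
  exists s : seq int, exists phi : forall i, 'Hom(gpiece N i, fpiece s i),
    (forall i, bijective (phi i)) /\
    (forall j i (x : gpiece N i), phi (i + 1) (gact N j i x) = fact s j i (phi i x)).

Record cdata := CData {
  cobj : int -> gdata;
  cdiff : forall p d, 'Hom(gpiece (cobj p) d, gpiece (cobj (p + 1)) d)
}.

Definition is_complex (K : cdata) : Prop :=
  [/\ forall p, is_gmod (cobj K p),
      forall p, is_gmor (cdiff K p)
    & forall p d (x : gpiece (cobj K p) d), cdiff K (p + 1) d (cdiff K p d x) = 0].

Definition cbounded (K : cdata) : Prop :=
  exists a b : int, forall p, ~~ (a <= p <= b) ->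
    forall d (x : gpiece (cobj K p) d), x = 0.

Definition cmap (K L : cdata) :=
  forall p d, 'Hom(gpiece (cobj K p) d, gpiece (cobj L p) d).

Definition is_chain (K L : cdata) (f : cmap K L) : Prop :=
  (forall p, is_gmor (f p)) /\
  forall p d (x : gpiece (cobj K p) d),
    f (p + 1) d (cdiff K p d x) = cdiff L p d (f p d x).

Definition homotopic (K L : cdata) (f g : cmap K L) : Prop :=
  exists h : forall p d, 'Hom(gpiece (cobj K (p + 1)) d, gpiece (cobj L p) d),
    (forall p, is_gmor (h p)) /\
    forall p d (x : gpiece (cobj K (p + 1)) d),
      f (p + 1) d x - g (p + 1) d x
        = cdiff L p d (h p d x) + h (p + 1) d (cdiff K (p + 1) d x).

(* F_j I^p = I^p_{<= j - p - n - 1} ; F_j I = 0 *)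
Definition F_zero (I : cdata) (j : int) : Prop :=
  forall p, le_zero (cobj I p) (j - p - n%:Z - 1).

(* sigma K : sigma K^p = K^p_{>= -p}, the submodule generated by the elements
   of degree >= -p; since Lambda is nonnegatively graded its degree-d piece is
   K^p_d for d >= -p and 0 otherwise. *)
Definition sigU (K : cdata) (p d : int) : {vspace gpiece (cobj K p) d} :=
  if - p <= d then fullv else 0%VS.

Definition sigma (K : cdata) : cdata :=
  @CData (fun p => @GData (fun d => subvs_of (sigU K p d))
            (fun j d => linfun (fun u : subvs_of (sigU K p d) =>
                 vsproj (sigU K p (d + 1)) (gact (cobj K p) j d (vsval u)))))
        (fun p d => linfun (fun u : subvs_of (sigU K p d) =>
                 vsproj (sigU K (p + 1) d) (cdiff K p d (vsval u)))).

Definition sig_incl (K : cdata) (p d : int) :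
  'Hom(gpiece (cobj (sigma K) p) d, gpiece (cobj K p) d) :=
  linfun (fun u : subvs_of (sigU K p d) => vsval u).

Definition restr (K L : cdata) (f : cmap K L) : cmap (sigma K) L :=
  fun p d => (f p d \o sig_incl K p d)%VF.

End Graded.

From HB Require Import structures.
From mathcomp Require Import all_boot all_order all_algebra.
From mathcomp Require Import zify.
From Stdlib Require Import ChoiceFacts IndefiniteDescription.
Import Order.TTheory GRing.Theory Num.Theory.
Local Open Scope ring_scope.
Set Implicit Arguments. Unset Strict Implicit.

(* A free module is a sum of shifted copies of Lambda^vee, and the coordinate of y on the
   dual basis vector e_S^* of the t-th summand is the coordinate of y e_S on the socle
   vector, which lives in the top degree -s_t of that summand.  Hence a morphism into a
   free module is determined by its components in degrees >= c once c <= -s_t for all t;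
   and a family of linear maps compatible with the action in degrees >= c always extends
   to a morphism: prescribe the e_S^*-coordinate of the image of x as the socle coordinate
   of g (x e_S), the exterior relations in the source making this compatible with the action.
   F_0 I = 0 puts the generators of I^r above degree -r-n-1, i.e. its socle in degrees
   >= -r+1.  So maps K^q -> I^r with r <= q+1 are determined by their restriction to sigma K^q
   (which is K^q in degrees >= -q), and every morphism sigma K^q -> I^r extends.  Chain maps
   (r = q), the squares with the differentials (r = q+1) and homotopies (r = q-1) are all of
   this kind, which gives both bijections. *)

Lemma linfunE (k : fieldType) (aT rT : vectType k) (f : aT -> rT) :
  linear f -> linfun f =1 f.
Proof.
move=> f_lin x.
pose F : {linear aT -> rT} := HB.pack f (GRing.isLinear.Build k aT rT *:%R f f_lin).
exact: lfunE F x.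
Qed.

Section ScalarFun.
Variables (R : pzRingType) (V : lmodType R) (f : V -> R).
Hypothesis f_scalar : scalar f.

Lemma scalar_fun0 : f 0 = 0.
Proof. by have := f_scalar (-1) 0 0; rewrite scaler0 addr0 mulN1r addNr. Qed.

Lemma scalar_funB x y : f (x - y) = f x - f y.
Proof. by rewrite -scaleN1r addrC f_scalar mulN1r addrC. Qed.

Lemma scalar_funN x : f (- x) = - f x.
Proof. by rewrite -[- x]add0r scalar_funB scalar_fun0 add0r. Qed.

End ScalarFun.

Lemma enum_setE m (S : {set 'I_m}) : enum S = [seq i <- enum 'I_m | i \in S].
Proof. by rewrite enumT /enum_mem. Qed.

Lemma sorted_enum_ord m : sorted (relpre val ltn) (enum 'I_m).
Proof. by rewrite -sorted_map val_enum_ord iota_ltn_sorted. Qed.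

Lemma sorted_enum_set m (S : {set 'I_m}) : sorted (relpre val ltn) (enum S).
Proof. by rewrite enum_setE (sorted_filter (relpre_trans ltn_trans)) ?sorted_enum_ord. Qed.

(* The degree argument of [coord] must stay explicit. *)
Unset Implicit Arguments.
(* [coord d (t, S) y] is the coefficient of [y] on the dual basis vector of e_S in the t-th
   summand; the five hypotheses below are all that is used of freeness. *)
Section FreeCoordinates.
Variables (k : fieldType) (n : nat) (s : seq int) (M : gdata k n).
Variable coord : forall d, fidx n s -> gpiece M d -> k.
Hypothesis coord_scalar : forall d ts, scalar (coord d ts).
Hypothesis coord_faithful : forall d y, (forall ts, coord d ts y = 0) -> y = 0.
Hypothesis coord_act : forall j d t S y,
  coord (d + 1) (t, S) (gact M j d y) =
  if j \in S then 0 else (-1) ^+ #|[set l in S | (l < j)%N]| * coord d (t, j |: S) y.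
Hypothesis coord_supp : forall d (t : 'I_(size s)) (S : {set 'I_n.+1}) (y : gpiece M d),
  #|S|%:Z != - (s`_t + d) -> coord d (t, S) y = 0.
Hypothesis coord_surj : forall d (psi : fidx n s -> k), exists y : gpiece M d,
  forall (t : 'I_(size s)) (S : {set 'I_n.+1}),
    #|S|%:Z = - (s`_t + d) -> coord d (t, S) y = psi (t, S).

Lemma coord_inj d y z : (forall ts, coord d ts y = coord d ts z) -> y = z.
Proof.
move=> yz; apply/eqP; rewrite -subr_eq0; apply/eqP/coord_faithful => ts.
by rewrite (scalar_funB (coord_scalar d ts)) yz subrr.
Qed.

Section WordCoord.
Variables (N : gdata k n) (g : forall d, 'Hom(gpiece N d, gpiece M d)).

Fixpoint word_coord (t : 'I_(size s)) (w : seq 'I_n.+1) : forall d, gpiece N d -> k :=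
  if w is j :: w' then fun d x => word_coord t w' (d + 1) (gact N j d x)
  else fun d x => coord d (t, set0) (g d x).

Lemma word_coord_scalar t w d : scalar (word_coord t w d).
Proof.
elim: w d => [|j w IH] d a x y /=; first by rewrite linearP coord_scalar.
by rewrite linearP IH.
Qed.

Lemma word_coord0 t w d : word_coord t w d 0 = 0.
Proof. exact: scalar_fun0 (word_coord_scalar t w d). Qed.

Lemma word_coordN t w d x : word_coord t w d (- x) = - word_coord t w d x.
Proof. exact: scalar_funN (word_coord_scalar t w d) x. Qed.

Lemma word_coord_supp (t : 'I_(size s)) w d (x : gpiece N d) :
  (size w)%:Z != - (s`_t + d) -> word_coord t w d x = 0.
Proof.
elim: w d x => [|j w IH] d x /= hw; first by rewrite coord_supp ?cards0.
apply: IH; apply: contra hw => /eqP hw; apply/eqP.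
by rewrite /= -addn1 PoszD hw addrA opprD addrNK.
Qed.

End WordCoord.

Local Notation idg := (fun d => \1%VF : 'Hom(gpiece M d, gpiece M d)).

Lemma word_coord_sorted t w : sorted (relpre val ltn) w -> forall d y,
  word_coord M idg t w d y = coord d (t, [set x in w]) y.
Proof.
elim: w => [|a w IH] /= w_sorted d y.
  by rewrite id_lfunE; congr (coord _ (_, _) _); apply/setP => x; rewrite !inE.
have a_min := order_path_min (relpre_trans ltn_trans) w_sorted.
rewrite IH ?(path_sorted w_sorted) // coord_act.
have -> : (a \in [set x in w]) = false.
  by rewrite inE; apply/negP => /(allP a_min); rewrite /= ltnn.
have -> : [set l in [set x in w] | (l < a)%N] = set0.
  apply/setP => x; rewrite !inE; apply/negP => /andP [/(allP a_min) /= ax xa].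
  by move: (ltn_trans ax xa); rewrite ltnn.
by rewrite cards0 expr0 mul1r; congr (coord _ (_, _) _); apply/setP => x; rewrite !inE.
Qed.

Lemma word_coord_gmor N (g : forall d, 'Hom(gpiece N d, gpiece M d)) t (d0 : int) :
  (forall d, d0 <= d -> forall j x, g (d + 1) (gact N j d x) = gact M j d (g d x)) ->
  forall w d, d0 <= d -> forall x, word_coord N g t w d x = word_coord M idg t w d (g d x).
Proof.
move=> g_mor; elim=> [|j w IH] d d0d x /=; first by rewrite id_lfunE.
by rewrite IH ?g_mor //; lia.
Qed.

Lemma coord_word_enum N (g : forall d, 'Hom(gpiece N d, gpiece M d)) t S d x :
  is_gmor g -> coord d (t, S) (g d x) = word_coord N g t (enum S) d x.
Proof.
move=> g_mor; rewrite (word_coord_gmor _ g t d _ _ _ (lexx d)) => [|e _ j y]; last exact: g_mor.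
by rewrite word_coord_sorted ?sorted_enum_set // set_enum.
Qed.

Lemma word_coord_agree N (g g' : forall d, 'Hom(gpiece N d, gpiece M d))
    (t : 'I_(size s)) (c : int) :
  c <= - s`_t -> (forall d, c <= d -> g d = g' d) ->
  forall w d x, word_coord N g t w d x = word_coord N g' t w d x.
Proof.
move=> ct gg'; elim=> [|j w IH] d x /=; last exact: IH.
have [cd|dc] := lerP c d; first by rewrite gg'.
by rewrite !coord_supp // cards0; apply/eqP; lia.
Qed.

Lemma gmor_eq_from N (f f' : forall d, 'Hom(gpiece N d, gpiece M d)) (c : int) :
  (forall t : 'I_(size s), c <= - s`_t) -> is_gmor f -> is_gmor f' ->
  (forall d, c <= d -> f d = f' d) -> forall d, f d = f' d.
Proof.
move=> cs f_mor f'_mor ff' d; apply/lfunP => x; apply: coord_inj => -[t S].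
by rewrite !coord_word_enum //; exact: word_coord_agree (cs t) ff' _ _ _.
Qed.

Lemma coord_socle_ge (c : int) : le_zero M (c - n%:Z - 2) -> forall t : 'I_(size s), c <= - s`_t.
Proof.
move=> M_low t; rewrite leNgt; apply/negP => st_c.
(* The generator of the [t]-th summand is its [setT]-coordinate, in degree [- s`_t - n - 1]. *)
have [y y_gen] := coord_surj (- s`_t - n%:Z - 1) (fun _ => 1).
have card_top : #|[set: 'I_n.+1]|%:Z = - (s`_t + (- s`_t - n%:Z - 1)).
  by rewrite cardsT card_ord; lia.
have := y_gen t setT card_top.
rewrite (M_low _ _ y) ?(scalar_fun0 (coord_scalar _ _)); last by lia.
by move/eqP; rewrite eq_sym oner_eq0.
Qed.

Section Extension.
Variables (N : gdata k n) (g : forall d, 'Hom(gpiece N d, gpiece M d)).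
Hypothesis N_sq : forall j d (x : gpiece N d), gact N j (d + 1) (gact N j d x) = 0.
Hypothesis N_anti : forall j l d (x : gpiece N d),
  gact N l (d + 1) (gact N j d x) + gact N j (d + 1) (gact N l d x) = 0.

Lemma word_coord_swap t pre a b post d (x : gpiece N d) :
  word_coord N g t (pre ++ a :: b :: post) d x = - word_coord N g t (pre ++ b :: a :: post) d x.
Proof.
elim: pre d x => [|c pre IH] d x /=; last exact: IH.
by have /eqP := N_anti a b d x; rewrite addr_eq0 => /eqP ->; rewrite word_coordN.
Qed.

Lemma word_coord_sq t pre a post d (x : gpiece N d) :
  word_coord N g t (pre ++ a :: a :: post) d x = 0.
Proof.
elim: pre d x => [|c pre IH] d x /=; last exact: IH.
by rewrite N_sq word_coord0.
Qed.

(* Moving [j] to its place in the increasing word [r] crosses the letters of [S] below [j]. *)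
Lemma word_coord_insert t j (S : {set 'I_n.+1}) r :
  j \notin S -> sorted (relpre val ltn) r -> j \in r -> forall pre d x,
  word_coord N g t (pre ++ j :: [seq i <- r | i \in S]) d x =
  (-1) ^+ count (fun l => (l \in S) && (l < j)%N) r *
  word_coord N g t (pre ++ [seq i <- r | i \in j |: S]) d x.
Proof.
move=> jS; elim: r => [|a r IH] r_sorted; first by rewrite in_nil.
rewrite in_cons => jr pre d x.
have a_min := order_path_min (relpre_trans ltn_trans) r_sorted.
have [ja | ja] := eqVneq j a.
  subst a; rewrite /= (negbTE jS) setU11 add0n /=.
  have -> : [seq i <- r | i \in j |: S] = [seq i <- r | i \in S].
    apply: eq_in_filter => y /(allP a_min) /= jy; rewrite !inE.
    by case: eqP jy => [->|//]; rewrite /= ltnn.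
  rewrite (@eq_in_count _ _ pred0) ?count_pred0 ?expr0 ?mul1r // => y /(allP a_min) /= jy.
  by apply/negbTE; rewrite negb_and -leqNgt ltnW ?orbT.
rewrite (negbTE ja) /= in jr.
have aj : (a < j)%N by apply: (allP a_min).
have aS' : (a \in j |: S) = (a \in S) by rewrite !inE eq_sym (negbTE ja).
rewrite /= aS' aj andbT.
case: (boolP (a \in S)) => aS /=; last by rewrite IH ?(path_sorted r_sorted).
rewrite word_coord_swap -cat_rcons IH ?(path_sorted r_sorted) //.
by rewrite -cats1 -catA /= add1n exprS mulN1r mulNr.
Qed.

Lemma word_coord_insert_mem t j (S : {set 'I_n.+1}) r :
  j \in S -> sorted (relpre val ltn) r -> j \in r ->
  forall pre d x, word_coord N g t (pre ++ j :: [seq i <- r | i \in S]) d x = 0.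
Proof.
move=> jS; elim: r => [|a r IH] r_sorted; first by rewrite in_nil.
rewrite in_cons => jr pre d x.
have [ja | ja] := eqVneq j a; first by subst a; rewrite /= jS word_coord_sq.
rewrite (negbTE ja) /= in jr.
rewrite /=; case: (boolP (a \in S)) => aS /=; last by rewrite IH ?(path_sorted r_sorted).
by rewrite word_coord_swap -cat_rcons IH ?(path_sorted r_sorted) ?oppr0.
Qed.

Definition ext_coords d (x : gpiece N d) : fidx n s -> k :=
  fun ts => word_coord N g ts.1 (enum ts.2) d x.

Definition ext_fun d (x : gpiece N d) : gpiece M d :=
  proj1_sig (constructive_indefinite_description _ (coord_surj d (ext_coords d x))).

Lemma coord_ext_fun d x t S : coord d (t, S) (ext_fun d x) = word_coord N g t (enum S) d x.
Proof.
have [cardS|cardS] := eqVneq (#|S|%:Z) (- (s`_t + d)).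
  exact: (proj2_sig (constructive_indefinite_description _ (coord_surj d (ext_coords d x)))).
by rewrite coord_supp // word_coord_supp // -cardE.
Qed.

Lemma ext_fun_linear d : linear (ext_fun d).
Proof.
move=> a x y; apply: coord_inj => -[t S].
by rewrite coord_scalar !coord_ext_fun word_coord_scalar.
Qed.

Definition ext d : 'Hom(gpiece N d, gpiece M d) := linfun (ext_fun d).

Lemma coord_ext d x t S : coord d (t, S) (ext d x) = word_coord N g t (enum S) d x.
Proof. by rewrite linfunE ?coord_ext_fun //; apply: ext_fun_linear. Qed.

Lemma ext_gmor : is_gmor ext.
Proof.
move=> j d x; apply: coord_inj => -[t S].
have j_enum : j \in enum 'I_n.+1 by rewrite mem_enum.
rewrite coord_act !coord_ext !enum_setE.
have [jS|jS] := boolP (j \in S).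
  exact: (word_coord_insert_mem t j S _ jS (sorted_enum_ord _) j_enum [::]).
have /= -> := word_coord_insert t j S _ jS (sorted_enum_ord _) j_enum [::] d x.
by rewrite cardE enum_setE size_filter; congr (_ ^+ _ * _); apply: eq_count => l; rewrite !inE.
Qed.

Lemma ext_agree (c : int) :
  (forall d, c <= d -> forall j x, g (d + 1) (gact N j d x) = gact M j d (g d x)) ->
  forall d, c <= d -> ext d = g d.
Proof.
move=> g_mor d cd; apply/lfunP => x; apply: coord_inj => -[t S].
by rewrite coord_ext (word_coord_gmor N g t c) // word_coord_sorted ?sorted_enum_set // set_enum.
Qed.

End Extension.
End FreeCoordinates.
Set Implicit Arguments.
Arguments coord_socle_ge {k n s M coord}.
Arguments gmor_eq_from {k n s M coord} _ _ _ _ {N}.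
Arguments ext {k n s M coord} _ {N}.
Arguments ext_gmor {k n s M coord} _ _ _ _ _ {N}.
Arguments ext_agree {k n s M coord} _ _ _ _ _ {N}.

Section StandardFree.
Variables (k : fieldType) (n : nat) (s : seq int).

Lemma scale_regularE (a b : k) : a *: (b : k^o) = a * b.
Proof. by []. Qed.

Definition fvalid (i : int) (ts : fidx n s) := #|ts.2|%:Z == - (s`_(ts.1) + i).

Lemma fdelta_eq0 (ts ts' : fidx n s) : ts != ts' -> fdelta k ts' ts = 0.
Proof. by rewrite ffunE => /negbTE ->. Qed.

Lemma mem_fUP i (phi : fW k n s) :
  reflect (forall ts, ~~ fvalid i ts -> phi ts = 0) (phi \in fU k n s i).
Proof.
pose X := [seq fdelta k ts | ts <- enum (fvalid i)].
apply: (iffP idP) => [phi_in ts ts_invalid | phi_supp].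
  rewrite (coord_span (X := in_tuple X) phi_in) sum_ffunE big1 // => l _.
  have /mapP [ts' ts'_valid ->] : X`_l \in X by rewrite mem_nth ?size_tuple.
  rewrite mem_enum in ts'_valid; rewrite ffunE fdelta_eq0 ?scaler0 //.
  by apply: contraNneq ts_invalid => ->.
have -> : phi = \sum_(ts | fvalid i ts) phi ts *: fdelta k ts.
  apply/ffunP => ts; rewrite sum_ffunE.
  have [ts_valid|ts_invalid] := boolP (fvalid i ts).
    rewrite (bigD1 ts) //= big1 => [|ts' /andP [_ ts'ts]].
      by rewrite !ffunE eqxx scale_regularE mulr1 addr0.
    by rewrite ffunE fdelta_eq0 ?scaler0 // eq_sym.
  rewrite phi_supp // big1 // => ts' ts'_valid; rewrite ffunE fdelta_eq0 ?scaler0 //.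
  by apply: contraNneq ts_invalid => ->.
apply: memv_suml => ts ts_valid; apply/memvZ/memv_span.
by apply: map_f; rewrite mem_enum.
Qed.

Lemma factW_linear j : linear (@factW k n s j).
Proof.
move=> a x y; apply/ffunP => ts; rewrite !ffunE.
case: ifP => _; first by rewrite scaler0 addr0.
by rewrite !scale_regularE mulrDr mulrCA.
Qed.

Lemma factW_in_fU j i (u : fpiece k n s i) : factW j (vsval u) \in fU k n s (i + 1).
Proof.
apply/mem_fUP => ts ts_invalid; rewrite ffunE; case: ifP => // jS.
rewrite (mem_fUP _ _ (subvsP u)) ?mulr0 //; apply: contra ts_invalid.
by rewrite /fvalid /= cardsU1 jS /= => /eqP valid; apply/eqP; lia.
Qed.

Lemma fact_val j i (u : fpiece k n s i) : vsval (fact k s j i u) = factW j (vsval u).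
Proof.
rewrite /fact linfunE ?vsprojK ?factW_in_fU // => a x y.
by rewrite linearP factW_linear linearP.
Qed.

End StandardFree.

Lemma free_coords (k : fieldType) (n : nat) (M : gdata k n) : is_free M ->
  exists (s : seq int) (coord : forall d, fidx n s -> gpiece M d -> k),
 [/\ forall d ts, scalar (coord d ts),
     forall d y, (forall ts, coord d ts y = 0) -> y = 0,
     forall j d t (S : {set 'I_n.+1}) y, coord (d + 1) (t, S) (gact M j d y) =
       if j \in S then 0 else (-1) ^+ #|[set l in S | (l < j)%N]| * coord d (t, j |: S) y,
     forall d (t : 'I_(size s)) (S : {set 'I_n.+1}) (y : gpiece M d),
       #|S|%:Z != - (s`_t + d) -> coord d (t, S) y = 0 &
     forall d (psi : fidx n s -> k), exists y : gpiece M d,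
       forall (t : 'I_(size s)) (S : {set 'I_n.+1}),
         #|S|%:Z = - (s`_t + d) -> coord d (t, S) y = psi (t, S)].
Proof.
case=> s [phi [phi_bij phi_act]].
exists s, (fun d ts y => vsval (phi d y) ts); split => /=.
- by move=> d ts a y z; rewrite !linearP /= !ffunE scale_regularE.
- move=> d y y0; apply: (bij_inj (phi_bij d)); rewrite linear0; apply: val_inj.
  by apply/ffunP => ts; rewrite y0 linear0 ffunE.
- by move=> j d t S y; rewrite phi_act fact_val ffunE.
- by move=> d t S y; apply: (mem_fUP _ _ (subvsP (phi d y)) (t, S)).
- move=> d psi; pose psi' : fW k n s := [ffun ts => if fvalid d ts then psi ts else 0].
  have psi'_in : psi' \in fU k n s d by apply/mem_fUP => ts /negbTE invalid; rewrite ffunE invalid.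
  have [phi_inv _ phiK] := phi_bij d.
  exists (phi_inv (vsproj (fU k n s d) psi')) => t S cardS.
  by rewrite phiK vsprojK // ffunE /fvalid /= cardS eqxx.
Qed.

Section FreeTarget.
Variables (k : fieldType) (n : nat) (M N : gdata k n).
Hypothesis M_free : is_free M.

Lemma free_gmor_eq (c : int) (f f' : forall d, 'Hom(gpiece N d, gpiece M d)) :
  le_zero M (c - n%:Z - 2) -> is_gmor f -> is_gmor f' ->
  (forall d, c <= d -> f d = f' d) -> forall d, f d = f' d.
Proof.
move=> M_low; have [s [coord [c_scalar c_faithful c_act c_supp c_surj]]] := free_coords M_free.
have socle_ge := coord_socle_ge c_scalar c_surj c M_low.
exact (gmor_eq_from c_scalar c_faithful c_act c_supp f f' c socle_ge).
Qed.

Lemma free_gmor_ext (c : int) (g : forall d, 'Hom(gpiece N d, gpiece M d)) :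
  (forall j d (x : gpiece N d), gact N j (d + 1) (gact N j d x) = 0) ->
  (forall j l d (x : gpiece N d),
     gact N l (d + 1) (gact N j d x) + gact N j (d + 1) (gact N l d x) = 0) ->
  (forall d, c <= d -> forall j x, g (d + 1) (gact N j d x) = gact M j d (g d x)) ->
  exists f : forall d, 'Hom(gpiece N d, gpiece M d),
    is_gmor f /\ forall d, c <= d -> f d = g d.
Proof.
move=> N_sq N_anti g_mor.
have [s [coord [c_scalar c_faithful c_act c_supp c_surj]]] := free_coords M_free.
exists (ext c_surj g); split.
  exact (ext_gmor c_scalar c_faithful c_act c_supp c_surj g N_sq N_anti).
exact (ext_agree c_scalar c_faithful c_act c_supp c_surj g c g_mor).
Qed.

End FreeTarget.

Section GradedMorphisms.
Variables (k : fieldType) (n : nat) (L M N : gdata k n).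

Lemma gmor_comp (f : forall d, 'Hom(gpiece L d, gpiece M d))
    (g : forall d, 'Hom(gpiece M d, gpiece N d)) :
  is_gmor f -> is_gmor g -> is_gmor (fun d => g d \o f d)%VF.
Proof. by move=> f_mor g_mor j d x; rewrite !comp_lfunE f_mor g_mor. Qed.

Lemma gmorD (f g : forall d, 'Hom(gpiece M d, gpiece N d)) :
  is_gmor f -> is_gmor g -> is_gmor (fun d => f d + g d).
Proof. by move=> f_mor g_mor j d x; rewrite !add_lfunE f_mor g_mor linearD. Qed.

Lemma gmorB (f g : forall d, 'Hom(gpiece M d, gpiece N d)) :
  is_gmor f -> is_gmor g -> is_gmor (fun d => f d - g d).
Proof. by move=> f_mor g_mor j d x; rewrite !add_lfunE !opp_lfunE f_mor g_mor linearB. Qed.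

End GradedMorphisms.

Lemma homotopic_eq (k : fieldType) (n : nat) (K L : cdata k n) (f g : cmap K L) :
  (forall p d, f p d = g p d) -> homotopic f g.
Proof.
move=> fg; exists (fun p d => 0); split; first by move=> p j d x; rewrite !zero_lfunE linear0.
by move=> p d x; rewrite fg subrr !zero_lfunE linear0 addr0.
Qed.

Section Sigma.
Variables (k : fieldType) (n : nat) (K : cdata k n).

Lemma sig_inclE p d (u : gpiece (cobj (sigma K) p) d) : sig_incl K p d u = vsval u.
Proof. by rewrite /sig_incl lfunE. Qed.

Lemma sig_inclK p d (u : gpiece (cobj (sigma K) p) d) :
  vsproj (sigU K p d) (sig_incl K p d u) = u.
Proof. by rewrite sig_inclE vsvalK. Qed.

Lemma sig_incl_proj p d (x : gpiece (cobj K p) d) :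
  - p <= d -> sig_incl K p d (vsproj (sigU K p d) x) = x.
Proof. by move=> pd; rewrite sig_inclE vsprojK // /sigU pd memvf. Qed.

Lemma sig_zero p d (u : gpiece (cobj (sigma K) p) d) : d < - p -> u = 0.
Proof.
move=> dp; have u0 : vsval u = 0.
  by move: (vsval u) (subvsP u) => v; rewrite /sigU (lt_geF dp) memv0 => /eqP.
by apply: subvs_inj; rewrite u0 linear0.
Qed.

Lemma sig_gactE p j d (u : gpiece (cobj (sigma K) p) d) :
  gact (cobj (sigma K) p) j d u = vsproj (sigU K p (d + 1)) (gact (cobj K p) j d (vsval u)).
Proof. by rewrite /= linfunE // => a x y; rewrite !linearP. Qed.

Lemma sig_cdiffE p d (u : gpiece (cobj (sigma K) p) d) :
  cdiff (sigma K) p d u = vsproj (sigU K (p + 1) d) (cdiff K p d (vsval u)).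
Proof. by rewrite /= linfunE // => a x y; rewrite !linearP. Qed.

Lemma sig_incl_gact p j d (u : gpiece (cobj (sigma K) p) d) :
  gact (cobj K p) j d (sig_incl K p d u) = sig_incl K p (d + 1) (gact (cobj (sigma K) p) j d u).
Proof.
have [dp|pd] := ltrP d (- p); first by rewrite (sig_zero u dp) !linear0.
by rewrite sig_gactE sig_incl_proj ?sig_inclE //; lia.
Qed.

Lemma sig_incl_cdiff p d (u : gpiece (cobj (sigma K) p) d) :
  cdiff K p d (sig_incl K p d u) = sig_incl K (p + 1) d (cdiff (sigma K) p d u).
Proof.
have [dp|pd] := ltrP d (- p); first by rewrite (sig_zero u dp) !linear0.
by rewrite sig_cdiffE sig_incl_proj ?sig_inclE //; lia.
Qed.

End Sigma.

Section LiftFromSigma.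
Variables (k : fieldType) (n : nat) (I K : cdata k n).
Hypotheses (I_free : forall p, is_free (cobj I p)) (I_F0 : F_zero I 0).
Hypothesis K_gmod : forall p, is_gmod (cobj K p).

Lemma le_zero_target q r : r <= q + 1 -> le_zero (cobj I r) (- q - n%:Z - 2).
Proof. by move=> rq e e_le; apply: I_F0; lia. Qed.

Lemma gmor_sigma_eq q r (A B : forall d, 'Hom(gpiece (cobj K q) d, gpiece (cobj I r) d)) :
  r <= q + 1 -> is_gmor A -> is_gmor B ->
  (forall d, (A d \o sig_incl K q d)%VF = (B d \o sig_incl K q d)%VF) -> forall d, A d = B d.
Proof.
move=> rq A_mor B_mor AB; apply: (free_gmor_eq (I_free r) (le_zero_target rq) A_mor B_mor) => d qd.
apply/lfunP => x; have /lfunP/(_ (vsproj (sigU K q d) x)) := AB d.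
by rewrite !comp_lfunE sig_incl_proj.
Qed.

Lemma gmor_sigma_ext q r (phi : forall d, 'Hom(gpiece (cobj (sigma K) q) d, gpiece (cobj I r) d)) :
  is_gmor phi ->
  exists F : forall d, 'Hom(gpiece (cobj K q) d, gpiece (cobj I r) d),
    is_gmor F /\ forall d, (F d \o sig_incl K q d)%VF = phi d.
Proof.
move=> phi_mor; have [_ K_sq K_anti] := K_gmod q.
pose g d := (phi d \o linfun (vsproj (sigU K q d)))%VF.
have g_incl d u : g d (sig_incl K q d u) = phi d u by rewrite comp_lfunE lfunE /= sig_inclK.
have [F [F_mor Fg]] : exists F, is_gmor F /\ forall d, - q <= d -> F d = g d.
  apply: (free_gmor_ext (I_free r) K_sq K_anti) => d qd j x.
  by rewrite -(sig_incl_proj x qd) sig_incl_gact !g_incl phi_mor.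
exists F; split => // d; apply/lfunP => u; rewrite comp_lfunE.
have [dq|qd] := ltrP d (- q); first by rewrite (sig_zero u dq) !linear0.
by rewrite Fg.
Qed.

Hypotheses (I_mor : forall p, is_gmor (cdiff I p)) (K_mor : forall p, is_gmor (cdiff K p)).

Lemma restr_inj (f f' : cmap K I) : is_chain f -> is_chain f' ->
  (forall p d, restr f p d = restr f' p d) -> forall p d, f p d = f' p d.
Proof.
by move=> [f_mor _] [f'_mor _] ff' p; apply: gmor_sigma_eq (f_mor p) (f'_mor p) _ => //; lia.
Qed.

Lemma restr_surj (g : cmap (sigma K) I) :
  is_chain g -> exists f : cmap K I, is_chain f /\ forall p d, restr f p d = g p d.
Proof.
move=> [g_mor g_diff].
have [f f_ext] := non_dep_dep_functional_choice functional_choice _ _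
  (fun p => gmor_sigma_ext (g_mor p)).
have f_incl p d u : f p d (sig_incl K p d u) = g p d u by rewrite -(f_ext p).2 comp_lfunE.
exists f; split; last by move=> p; apply: (f_ext p).2.
split=> [p|p d x]; first exact: (f_ext p).1.
suff /(_ d)/lfunP/(_ x) : forall d, (f (p + 1) d \o cdiff K p d = cdiff I p d \o f p d)%VF.
  by rewrite !comp_lfunE.
apply: gmor_sigma_eq (lexx _) _ _ _.
- exact: gmor_comp (@K_mor p) (f_ext (p + 1)).1.
- exact: gmor_comp (f_ext p).1 (@I_mor p).
- move=> e; apply/lfunP => u.
  by rewrite !comp_lfunE sig_incl_cdiff !f_incl g_diff.
Qed.

Lemma homotopic_restr (f f' : cmap K I) : is_chain f -> is_chain f' ->
  homotopic (restr f) (restr f') -> homotopic f f'.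
Proof.
move=> [f_mor _] [f'_mor _] [h [h_mor h_eq]].
have [H H_ext] := non_dep_dep_functional_choice functional_choice _ _
  (fun p => gmor_sigma_ext (h_mor p)).
have H_incl p d u : H p d (sig_incl K (p + 1) d u) = h p d u.
  by rewrite -(H_ext p).2 comp_lfunE.
exists H; split=> [p|p d x]; first exact: (H_ext p).1.
suff /(_ d)/lfunP/(_ x) : forall d,
    f (p + 1) d - f' (p + 1) d = (cdiff I p d \o H p d)%VF + (H (p + 1) d \o cdiff K (p + 1) d)%VF.
  by rewrite !add_lfunE opp_lfunE !comp_lfunE.
apply: gmor_sigma_eq; first by lia.
- exact: gmorB (f_mor _) (f'_mor _).
- exact: gmorD (gmor_comp (H_ext p).1 (@I_mor p)) (gmor_comp (@K_mor _) (H_ext _).1).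
- move=> e; apply/lfunP => u; rewrite !comp_lfunE !add_lfunE opp_lfunE !comp_lfunE.
  by rewrite sig_incl_cdiff !H_incl -h_eq /restr !comp_lfunE.
Qed.

End LiftFromSigma.

Theorem lemma3p1 (k : fieldType) (n : nat) (I K : cdata k n) :
  (2 <= n)%N ->
  is_complex I -> cbounded I -> (forall p, is_free (cobj I p)) -> F_zero I 0 ->
  is_complex K -> cbounded K ->
  (* Hom_C(K, I) -> Hom_C(sigma K, I) is bijective *)
  ((forall f f' : cmap K I, is_chain f -> is_chain f' ->
      (forall p d, restr f p d = restr f' p d) -> forall p d, f p d = f' p d) /\
   (forall g : cmap (sigma K) I, is_chain g ->
      exists f : cmap K I, is_chain f /\ forall p d, restr f p d = g p d)) /\
  (* Hom_K(K, I) -> Hom_K(sigma K, I) is bijective *)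
  ((forall f f' : cmap K I, is_chain f -> is_chain f' ->
      homotopic (restr f) (restr f') -> homotopic f f') /\
   (forall g : cmap (sigma K) I, is_chain g ->
      exists f : cmap K I, is_chain f /\ homotopic (restr f) g)).
Proof.
move=> _ [_ I_mor _] _ I_free I_F0 [K_gmod K_mor _] _.
have surj := restr_surj I_free I_F0 K_gmod I_mor K_mor.
split; split.
- exact: restr_inj I_free I_F0.
- exact: surj.
- exact: homotopic_restr I_free I_F0 K_gmod I_mor K_mor.
- move=> g /surj [f [f_chain fg]]; exists f; split => //.
  exact: homotopic_eq.
Qed.
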